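(* Consider the graph whose vertices are the admissible Hilbert polynomials and whose edges are the pairs $(P,\sigma(P))$ and $(P,\lambda(P))$ for all admissible Hilbert polynomials $P$. This graph is an infinite binary tree (each vertex $P$ having the two children $\sigma(P)$ and $\lambda(P)$), whose root is the constant polynomial $1$.
   Context: Binomial coefficients are polynomials in $t$: $\binom{t+a}{b}=\frac{(t+a)\cdots(t+a-b+1)}{b!}$ for $b\ge0$ and $0$ for $b<0$. A polynomial $P\in\mathbb{Q}[t]$ is an admissible Hilbert polynomial if it is the Hilbert polynomial of a nonempty closed subscheme of some projective space over an algebraically closed field; equivalently it has a (unique) Gotzmann expression $P(t)=\sum_{j=1}^r\binom{t+b_j-(j-1)}{b_j}$ with integers $b_1\ge\dots\ge b_r\ge0$, and equivalently a (unique) Macaulay–Hartshorne expression $P(t)=\sum_{i=0}^d\binom{t+i}{i+1}-\binom{t+i-e_i}{i+1}$ with integers $e_0\ge e_1\ge\dots\ge e_d>0$. Define $\sigma(P):=1+P$ (Gotzmann partition $(b_1,\dots,b_r,0)$, Macaulay–Hartshorne partition $(e_0+1,e_1,\dots,e_d)$) and $\lambda(P)$ the admissible polynomial with Gotzmann expression $\sum_{j=1}^r\binom{t+b_j+1-(j-1)}{b_j+1}$ (Macaulay–Hartshorne partition $(e_0,e_0,e_1,\dots,e_d)$). *)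

From mathcomp Require Import all_boot all_order all_algebra.
From Stdlib Require Import Relations.
Set Implicit Arguments. Unset Strict Implicit. Unset Printing Implicit Defensive.
Import Order.TTheory GRing.Theory Num.Theory.
Local Open Scope ring_scope.

(* The binomial polynomial  binom(t + a, b) = (t+a)(t+a-1)...(t+a-b+1)/b!  in Q[t]
   (for b : nat, so b >= 0; the case b < 0 never occurs below). *)
Definition binp (a : int) (b : nat) : {poly rat} :=
  (b`!%:R)^-1 *: \prod_(i < b) ('X + ((a - (i : nat)%:Z)%:~R)%:P).

(* Gotzmann polynomial of a sequence s = [:: b_1; ...; b_r] :
   sum_{j=1}^r binom(t + b_j - (j-1), b_j)   (j is 0-indexed below). *)
Definition gotz (s : seq nat) : {poly rat} :=
  \sum_(j < size s) binp ((nth 0%N s j)%:Z - (j : nat)%:Z) (nth 0%N s j).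

Definition gotz_partition (s : seq nat) : bool :=
  (s != [::]) && sorted geq s.

Definition admissible (P : {poly rat}) : Prop :=
  exists s, gotz_partition s /\ P = gotz s.

Definition sigma (P : {poly rat}) : {poly rat} := 1 + P.

(* Stated relationally so that well-definedness of lambda is part of the claim. *)
Definition lambda_rel (P Q : {poly rat}) : Prop :=
  exists s, gotz_partition s /\ P = gotz s /\ Q = gotz (map S s).

Definition rooted_binary_tree (T : Type) (V : T -> Prop)
    (c1 c2 : T -> T -> Prop) (root : T) : Prop :=
  let edge := fun P Q => V P /\ (c1 P Q \/ c2 P Q) in
  [/\ V root,
      (forall P, V P -> exists Q1 Q2,
          c1 P Q1 /\ c2 P Q2 /\ V Q1 /\ V Q2 /\ Q1 <> Q2 /\
          (forall Q, c1 P Q -> Q = Q1) /\ (forall Q, c2 P Q -> Q = Q2)),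
      (forall P, ~ edge P root),
      (forall P P' Q, edge P Q -> edge P' Q -> P = P') &
      (forall Q, V Q -> clos_refl_trans T edge root Q)].

From mathcomp Require Import all_boot all_order all_algebra.
From Stdlib Require Import Relations.
Set Implicit Arguments. Unset Strict Implicit. Unset Printing Implicit Defensive.
Import GRing.Theory Num.Theory.
Local Open Scope ring_scope.

(* The Gotzmann expression identifies an admissible polynomial with a
   nonincreasing sequence [b_1; ...; b_r]: the top-degree coefficient of the
   sum counts the b_j equal to b_1, so it is nonzero, the degree is b_1, and
   peeling off the first binomial recovers the rest.  On sequences, sigma
   appends a 0 and lambda adds 1 to every entry; these two moves are disjoint
   and injective, and every partition other than [0] is obtained by exactly
   one of them (according as its last entry is 0 or not) from a partition of
   smaller weight sum + length.  Hence the tree structure is transported from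
   sequences to polynomials. *)

Lemma binpE a b :
  binp a b = (b`!%:R)^-1 *: \prod_(i < b) ('X - (- (a - (i : nat)%:Z)%:~R)%:P).
Proof. by congr (_ *: _); apply: eq_bigr => i _; rewrite polyCN opprK. Qed.

Lemma size_binp a b : size (binp a b) = b.+1.
Proof.
rewrite binpE size_scale ?size_prod_XsubC -?[index_enum _]enumT ?size_enum_ord //.
by rewrite invr_eq0 pnatr_eq0 -lt0n fact_gt0.
Qed.

Lemma lead_coef_binp a b : lead_coef (binp a b) = (b`!%:R)^-1.
Proof. by rewrite binpE lead_coefZ lead_coef_prod_XsubC mulr1. Qed.

Lemma coef_binp_top a b h :
  (b <= h)%N -> (binp a b)`_h = if b == h then (h`!%:R)^-1 else 0.
Proof.
case: ltngtP => // [lt_bh | ->] _; first by rewrite nth_default ?size_binp.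
by rewrite -(lead_coef_binp a) lead_coefE size_binp.
Qed.

Lemma binp0 a : binp a 0 = 1.
Proof. by rewrite /binp big_ord0 invr1 scale1r. Qed.

Fixpoint gotz_from (m : nat) (s : seq nat) : {poly rat} :=
  if s is b :: s' then binp (b%:Z - m%:Z) b + gotz_from m.+1 s' else 0.

Lemma gotz_fromE m s : gotz_from m s =
  \sum_(j < size s) binp ((nth 0%N s j)%:Z - (j + m)%N%:Z) (nth 0%N s j).
Proof.
elim: s m => [|b s IH] m /=; first by rewrite big_ord0.
rewrite big_ord_recl IH; congr (_ + _).
by apply: eq_bigr => j _; rewrite /= /bump /= add1n addSnnS.
Qed.

Lemma gotzE s : gotz s = gotz_from 0 s.
Proof. by rewrite gotz_fromE; apply: eq_bigr => j _; rewrite addn0. Qed.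

Lemma gotz_from_cat m s t :
  gotz_from m (s ++ t) = gotz_from m s + gotz_from (m + size s) t.
Proof.
elim: s m => [|b s IH] m /=; first by rewrite add0r addn0.
by rewrite IH addrA addSnnS.
Qed.

Lemma gotz_rcons0 s : gotz (rcons s 0%N) = sigma (gotz s).
Proof. by rewrite !gotzE -cats1 gotz_from_cat /= binp0 addr0 addrC. Qed.

Lemma gotz_root : gotz [:: 0%N] = 1.
Proof. by rewrite gotzE /= binp0 addr0. Qed.

Lemma coef_gotz_from_top m s h : all (fun b => b <= h)%N s ->
  (gotz_from m s)`_h = (count_mem h s)%:R * (h`!%:R)^-1.
Proof.
elim: s m => [|b s IH] m /=; first by rewrite coef0 mul0r.
case/andP=> le_bh le_sh; rewrite coefD IH // coef_binp_top // natrD mulrDl.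
by case: eqP; rewrite ?mul1r ?mul0r.
Qed.

Lemma size_gotz_from m b s :
  sorted geq (b :: s) -> size (gotz_from m (b :: s)) = b.+1.
Proof.
move=> so; have le_b : all (fun c => c <= b)%N (b :: s).
  by rewrite /= leqnn (order_path_min (rev_trans leq_trans) so).
have top : (gotz_from m (b :: s))`_b != 0.
  rewrite coef_gotz_from_top //= eqxx mulf_neq0 //.
    by rewrite pnatr_eq0.
  by rewrite invr_eq0 pnatr_eq0 -lt0n fact_gt0.
apply/eqP; rewrite eqn_leq ltnNge; apply/andP; split.
  apply/leq_sizeP => h lt_bh; rewrite coef_gotz_from_top.
    rewrite (count_memPn _) ?mul0r //; apply: contraTN le_b => h_in.
    by apply/allPn; exists h; rewrite // -ltnNge.
  by apply: sub_all le_b => c /leq_trans; apply; apply: ltnW.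
by apply: contra top => /leq_sizeP ->.
Qed.

Lemma gotz_from_inj m s s' : sorted geq s -> sorted geq s' ->
  gotz_from m s = gotz_from m s' -> s = s'.
Proof.
elim: s m s' => [|b s IH] m [|b' s'] //= so so' E.
- by have := size_gotz_from m so'; rewrite /= -E size_poly0.
- by have := size_gotz_from m so; rewrite /= E size_poly0.
have [eq_bb'] : b.+1 = b'.+1.
  by rewrite -(size_gotz_from m so) -(size_gotz_from m so') /= E.
subst b'; rewrite (IH m.+1 s') ?(path_sorted so) ?(path_sorted so') //.
exact: addrI E.
Qed.

Lemma gotz_inj : {in gotz_partition &, injective gotz}.
Proof.
move=> s s' /andP[_ so] /andP[_ so']; rewrite !gotzE; exact: gotz_from_inj.
Qed.

Definition gotz_child (s t : seq nat) : Prop := t = rcons s 0%N \/ t = map S s.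

Lemma rcons0_neq_mapS s s' : rcons s 0%N <> map S s'.
Proof.
move=> E; have : 0%N \in map S s' by rewrite -E mem_rcons mem_head.
by case/mapP.
Qed.

Lemma gotz_child_inj s s' t : gotz_child s t -> gotz_child s' t -> s = s'.
Proof.
case=> -> [E | E].
- exact: rcons_injl E.
- by case: (rcons0_neq_mapS E).
- by case: (rcons0_neq_mapS (esym E)).
- exact: (inj_map succn_inj) E.
Qed.

Lemma gotz_child_root s : s != [::] -> ~ gotz_child s [:: 0%N].
Proof. by case: s => // b [|c s] _ []. Qed.

Lemma gotz_partition_child s t :
  gotz_partition s -> gotz_child s t -> gotz_partition t.
Proof.
case/andP=> ne so [->|->]; apply/andP; split.
- by rewrite -size_eq0 size_rcons.
- by case: s ne so => // b s _ /= so; rewrite rcons_path so.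
- by rewrite -size_eq0 size_map size_eq0.
- exact: homo_sorted so.
Qed.

Lemma gotz_partition_parent t : gotz_partition t -> t != [:: 0%N] ->
  exists2 s, gotz_partition s & gotz_child s t.
Proof.
case/lastP: t => [|s x] // /andP[_ so] ne.
have ge_x : all (leq x) s.
  have : sorted leq (rev (rcons s x)) by rewrite rev_sorted.
  by rewrite rev_rcons /= => /(order_path_min leq_trans); rewrite all_rev.
case: x so ge_x ne => [|x] so ge_x ne.
  exists s; last by left.
  apply/andP; split; first by case: s ne {so ge_x}.
  apply: subseq_sorted (subseq_rcons s 0%N) so; exact: rev_trans leq_trans.
exists (map predn (rcons s x.+1)); last first.
  right; rewrite -map_comp map_id_in // => c.
  by rewrite mem_rcons in_cons => /predU1P [-> // | /(allP ge_x)]; case: c.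
apply/andP; split; first by rewrite -size_eq0 size_map size_rcons.
by apply: homo_sorted so => a b; rewrite /= -!subn1; apply: leq_sub2r.
Qed.

(* The depth of [gotz s] in the tree is [(gotz_weight s).-1]. *)
Definition gotz_weight (s : seq nat) : nat := sumn s + size s.

Lemma gotz_weight_child s t :
  s != [::] -> gotz_child s t -> (gotz_weight s < gotz_weight t)%N.
Proof.
rewrite /gotz_weight => ne [->|->]; first by rewrite sumn_rcons size_rcons addn0 addnS.
have -> : sumn (map S s) = (sumn s + size s)%N.
  by elim: (s) => //= a u ->; rewrite addSn addnS addnA.
by rewrite size_map -[X in (X < _)%N]addn0 ltn_add2l lt0n size_eq0.
Qed.

Definition tree_edge (P Q : {poly rat}) : Prop :=
  admissible P /\ (Q = sigma P \/ lambda_rel P Q).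

Lemma tree_edgeP P Q : tree_edge P Q <->
  exists s t, [/\ gotz_partition s, gotz_child s t, P = gotz s & Q = gotz t].
Proof.
split.
  case=> [[s [ps ->]] [-> | [s' [ps' [-> ->]]]]].
    by exists s, (rcons s 0%N); split=> //; [left | rewrite gotz_rcons0].
  by exists s', (map S s'); split=> //; right.
case=> [s [t [ps [->|->] -> ->]]]; (split; first by exists s).
  by left; rewrite gotz_rcons0.
by right; exists s.
Qed.

Lemma lambda_rel_gotz s Q :
  gotz_partition s -> lambda_rel (gotz s) Q -> Q = gotz (map S s).
Proof. by move=> ps [s' [ps' [/(gotz_inj ps ps') -> ->]]]. Qed.

Lemma gotz_reachable t :
  gotz_partition t -> clos_refl_trans _ tree_edge 1 (gotz t).
Proof.
have [n] := ubnP (gotz_weight t); elim: n t => // n IH t lt_tn pt.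
have [-> | ne] := eqVneq t [:: 0%N]; first by rewrite gotz_root; apply: rt_refl.
have [s ps cst] := gotz_partition_parent pt ne.
apply: rt_trans (IH s _ ps) (rt_step _ _ _ _ _); last by apply/tree_edgeP; exists s, t.
apply: leq_trans (gotz_weight_child _ cst) _; first by case/andP: ps.
by rewrite -ltnS.
Qed.

Theorem theorem2p10 :
  rooted_binary_tree admissible (fun P Q => Q = sigma P) lambda_rel (1 : {poly rat}).
Proof.
split.
- by exists [:: 0%N]; rewrite gotz_root.
- move=> _ [s [ps ->]]; exists (sigma (gotz s)), (gotz (map S s)).
  have pr : gotz_partition (rcons s 0%N) by apply: gotz_partition_child ps _; left.
  have pm : gotz_partition (map S s) by apply: gotz_partition_child ps _; right.
  split=> //; split; first by exists s.
  split; first by exists (rcons s 0%N); rewrite gotz_rcons0.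
  split; first by exists (map S s).
  split; first by rewrite -gotz_rcons0 => /(gotz_inj pr pm)/rcons0_neq_mapS.
  by split=> // Q; apply: lambda_rel_gotz.
- move=> P /tree_edgeP [s [t [ps cst _ E]]].
  have pt := gotz_partition_child ps cst.
  have t0 : t = [:: 0%N] by apply: (gotz_inj pt); rewrite // gotz_root.
  by move: cst; rewrite t0; apply: gotz_child_root; case/andP: ps.
- move=> P P' Q /tree_edgeP [s [t [ps cst -> ->]]] /tree_edgeP [s' [t' [ps' cst' -> E]]].
  have Et : t = t' :=
    gotz_inj (gotz_partition_child ps cst) (gotz_partition_child ps' cst') E.
  by rewrite Et in cst; rewrite (gotz_child_inj cst cst').
- by move=> _ [s [ps ->]]; apply: gotz_reachable.
Qed.
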